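(* Let $a\neq 0$, $b$ be integers with $\gcd(a,b)=1$, let $k\ge 1$ be an integer, and let $c_1,e_1\in\mathbb{Q}\setminus\{0\}$, $c_0,e_0\in\mathbb{Q}$. Then there is no integer $m>4$ and no $\delta\in\mathbb{Q}\setminus\{0\}$ such that the polynomial identity $$S_{a,b}^k(c_1x+c_0)=e_1D_m(x,\delta)+e_0$$ holds in $\mathbb{Q}[x]$.
   Context: The Bernoulli polynomials $B_n(x)$ are defined by $\frac{t e^{tx}}{e^t-1}=\sum_{n\ge 0}B_n(x)\frac{t^n}{n!}$. For integers $a\neq 0$, $b$ with $\gcd(a,b)=1$ and an integer $k\ge 1$, define the polynomial $$S_{a,b}^k(x):=\frac{a^k}{k+1}\left(B_{k+1}\!\left(x+\frac{b}{a}\right)-B_{k+1}\!\left(\frac{b}{a}\right)\right)\in\mathbb{Q}[x].$$ For a positive integer $m$ and a number $\delta$, the $m$-th Dickson polynomial with parameter $\delta$ is $$D_m(x,\delta)=\sum_{i=0}^{\lfloor m/2\rfloor}\frac{m}{m-i}\binom{m-i}{i}(-\delta)^i x^{m-2i},$$ equivalently characterized by $D_m(z+\delta/z,\delta)=z^m+(\delta/z)^m$. *)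

From HB Require Import structures.
From mathcomp Require Import all_boot all_order all_algebra.
Set Implicit Arguments. Unset Strict Implicit. Unset Printing Implicit Defensive.
Import Order.TTheory GRing.Theory Num.Theory.
Local Open Scope ring_scope.

(* bern_seq n = [:: B_0; ...; B_n], Bernoulli numbers with B_1 = -1/2
   (the convention of t/(e^t-1)), via B_0 = 1 and
   B_n = -1/(n+1) * \sum_{j<n} C(n+1,j) B_j. *)
Fixpoint bern_seq (n : nat) : seq rat :=
  match n with
  | 0 => [:: 1]
  | n'.+1 => let s := bern_seq n' in
      rcons s (- (n'.+2)%:R^-1 * \sum_(j < n'.+1) ('C(n'.+2, j))%:R * s`_j)
  end.

Definition bernoulli (n : nat) : rat := (bern_seq n)`_n.

Definition bernpoly (n : nat) : {poly rat} :=
  \sum_(j < n.+1) (('C(n, j))%:R * bernoulli j) *: 'X^(n - j).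

Definition Sab (a b : int) (k : nat) : {poly rat} :=
  let r : rat := (b%:~R) / (a%:~R) in
  ((a%:~R : rat) ^+ k / (k.+1)%:R) *:
    ((bernpoly k.+1) \Po ('X + r%:P) - ((bernpoly k.+1).[r])%:P).

Definition dickson (m : nat) (delta : rat) : {poly rat} :=
  \sum_(i < (m./2).+1)
     ((m%:R / (m - i)%:R) * ('C(m - i, i))%:R * (- delta) ^+ i) *: 'X^(m - 2 * i).

From HB Require Import structures.
From mathcomp Require Import all_boot all_order all_algebra.
From mathcomp Require Import ring lra zify.
Set Implicit Arguments. Unset Strict Implicit. Unset Printing Implicit Defensive.
Import Order.TTheory GRing.Theory Num.Theory.
Local Open Scope ring_scope.

(* Write n = k + 1.  Up to a nonzero scalar K and an additive constant,
   S_{a,b}^k(c1 x + c0) is B_n(c1 x + h) with h = c0 + b/a, and B_n is an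
   Appell sequence: the coefficient of x^(n-t) in B_n(c x + h) is
   c^(n-t) C(n,t) B_t(h).  Comparing the nonconstant coefficients with those
   of e1 D_m(x, delta) + e0:
   - the leading coefficients force m = n;
   - x^(n-1) (absent from D_n) forces B_1(h) = 0, i.e. h = 1/2;
   - x^(n-2) then fixes c^2 delta = (n-1)/24, using B_2(1/2) = -1/12;
   - x^(n-4), using B_4(1/2) = 7/240, finally yields 2n = 9, absurd. *)

(* Choosing j elements, then n - t of the remaining n - j, is choosing t
   elements and then j of them; this reindexes the Appell expansion below. *)
Lemma bin_mul_sub (n j t : nat) : (j <= t <= n)%N ->
  ('C(n, j) * 'C(n - j, n - t) = 'C(n, t) * 'C(t, j))%N.
Proof.
case/andP=> hjt htn.
have sub_sub : (n - t = (n - j) - (t - j))%N by lia.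
have factC : ('C(n - j, t - j) * ((t - j)`! * (n - t)`!) = (n - j)`!)%N.
  by rewrite sub_sub bin_fact //; lia.
rewrite sub_sub bin_sub; last by lia.
apply/eqP; rewrite -(eqn_pmul2r (_ : 0 < j`! * (t - j)`! * (n - t)`!))%N;
  last by rewrite !muln_gt0 !fact_gt0.
apply/eqP; transitivity n`!.
  by rewrite -(bin_fact (leq_trans hjt htn)) -factC; ring.
by rewrite -(bin_fact htn) -(bin_fact hjt); ring.
Qed.

Lemma natr_bin_fact (R : comRingType) n k :
  'C(n, k)%:R * k`!%:R = \prod_(i < k) (n%:R - i%:R) :> R.
Proof.
rewrite -natrM bin_ffact ffact_prod natr_prod.
have [kn | nk] := leqP k n.
  by apply: eq_bigr => i _; rewrite natrB // ltnW // (leq_trans (ltn_ord i)).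
by rewrite (bigD1 (Ordinal nk)) // [RHS](bigD1 (Ordinal nk)) //= subnn subrr !mul0r.
Qed.

Lemma natr_bin2 (R : comRingType) n : 'C(n, 2)%:R * 2 = n%:R * (n%:R - 1) :> R.
Proof.
by have := natr_bin_fact R n 2; rewrite !big_ord_recr big_ord0 /= subr0 mul1r => <-.
Qed.

Lemma natr_bin4 (R : comRingType) n :
  'C(n, 4)%:R * 24 = n%:R * (n%:R - 1) * (n%:R - 2) * (n%:R - 3) :> R.
Proof.
by have := natr_bin_fact R n 4; rewrite !big_ord_recr big_ord0 /= subr0 mul1r => <-.
Qed.

Lemma coef_affine_exp (R : comRingType) (c h : R) (p i : nat) :
  ((c *: 'X + h%:P) ^+ p)`_i = c ^+ i * h ^+ (p - i) *+ 'C(p, i).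
Proof.
rewrite addrC exprDn coef_sum.
under eq_bigr => j _ do rewrite coefMn -polyC_exp exprZn coefCM coefZ coefXn.
have [hip | hpi] := leqP i p; last first.
  rewrite bin_small // mulr0n big1 // => j _.
  by rewrite eqn_leq [(i <= j)%N]leqNgt (leq_trans (ltn_ord j)) ?mulr0 ?mul0rn ?andbF.
rewrite (bigD1 (Ordinal (hip : (i < p.+1)%N))) //= eqxx mulr1 mulrC big1 ?addr0 //.
move=> j hj; have /negbTE -> : (i != j :> nat) by rewrite eq_sym.
by rewrite !mulr0 mul0rn.
Qed.

Lemma comp_shifted_affine (R : comRingType) (p : {poly R}) (K r c c0 : R) :
  (K *: (p \Po ('X + r%:P) - (p.[r])%:P)) \Po (c *: 'X + c0%:P) =
  K *: (p \Po (c *: 'X + (c0 + r)%:P)) - (K * p.[r])%:P.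
Proof.
rewrite comp_polyZ comp_polyB comp_polyC -comp_polyA comp_polyD comp_polyX comp_polyC.
by rewrite -addrA -polyCD scalerBr scale_polyC.
Qed.

Lemma coef_eq_up_to_const (R : ringType) (p q : {poly R}) (a b : R) i :
  p - a%:P = q + b%:P -> (0 < i)%N -> p`_i = q`_i.
Proof.
move=> E hi; have := congr1 (coefp i) E.
by rewrite /= coefB coefD !coefC gtn_eqF // subr0 addr0.
Qed.

Lemma horner_bernpoly n x : (bernpoly n).[x] =
  \sum_(j < n.+1) 'C(n, j)%:R * bernoulli j * x ^+ (n - j).
Proof.
by rewrite /bernpoly horner_sum; apply: eq_bigr => j _; rewrite hornerZ hornerXn.
Qed.

Lemma coef_bernpoly_affine n (c h : rat) i : (bernpoly n \Po (c *: 'X + h%:P))`_i =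
  \sum_(j < n.+1) 'C(n, j)%:R * bernoulli j * (c ^+ i * h ^+ (n - j - i) *+ 'C(n - j, i)).
Proof.
rewrite /bernpoly linear_sum coef_sum; apply: eq_bigr => j _.
by rewrite /= comp_polyZ rmorphXn /= comp_polyX coefZ coef_affine_exp.
Qed.

Lemma coef_bernpoly_affine_high n (c h : rat) i : (n < i)%N ->
  (bernpoly n \Po (c *: 'X + h%:P))`_i = 0.
Proof.
move=> hni; rewrite coef_bernpoly_affine big1 // => j _.
by rewrite (@bin_small (n - j)) ?mulr0n ?mulr0 //; lia.
Qed.

Lemma coef_bernpoly_affine_sub n (c h : rat) t : (t <= n)%N ->
  (bernpoly n \Po (c *: 'X + h%:P))`_(n - t) =
  c ^+ (n - t) * 'C(n, t)%:R * (bernpoly t).[h].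
Proof.
move=> htn; rewrite coef_bernpoly_affine horner_bernpoly mulr_sumr.
rewrite -(big_mkord xpredT (fun j => 'C(n, j)%:R * bernoulli j *
  (c ^+ (n - t) * h ^+ (n - j - (n - t)) *+ 'C(n - j, n - t)))).
rewrite (big_cat_nat _ (_ : t.+1 <= n.+1)%N) //=.
rewrite [X in _ + X]big_nat_cond [X in _ + X]big1 ?addr0 ?big_mkord; last first.
  move=> j /andP [/andP [htj hjn] _].
  by rewrite (@bin_small (n - j)) ?mulr0n ?mulr0 //; lia.
apply: eq_bigr => -[j /= hjt].
have -> : (n - j - (n - t) = t - j)%N by lia.
have binE : 'C(n, j)%:R * 'C(n - j, n - t)%:R = 'C(n, t)%:R * 'C(t, j)%:R :> rat.
  by rewrite -!natrM bin_mul_sub //; lia.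
rewrite -mulr_natr.
transitivity (c ^+ (n - t) * h ^+ (t - j) * bernoulli j *
              ('C(n, j)%:R * 'C(n - j, n - t)%:R)); by [ring | rewrite binE; ring].
Qed.

Lemma bernoulli_small : [/\ bernoulli 0 = 1, bernoulli 1 = - 2^-1, bernoulli 2 = 6^-1,
  bernoulli 3 = 0 & bernoulli 4 = - 30^-1].
Proof.
rewrite /bernoulli /= !big_ord_recr !big_ord0 /=.
by split; apply/eqP; vm_compute.
Qed.

Lemma bernpoly_small_values (h : rat) :
  [/\ (bernpoly 0).[h] = 1, (bernpoly 1).[h] = h - 2^-1,
      (bernpoly 2).[2^-1] = - 12^-1 & (bernpoly 4).[2^-1] = 7 / 240].
Proof.
have [B0 B1 B2 B3 B4] := bernoulli_small.
rewrite !horner_bernpoly !big_ord_recr big_ord0 /= B0 B1 B2 B3 B4 !big_ord0 !add0r.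
split; [| |by apply/eqP; vm_compute..].
- by rewrite bin0 subnn expr0 !mulr1.
- by rewrite bin0 binn subn0 subnn expr1 expr0 !mulr1 !mul1r.
Qed.

Lemma coef_dickson m d i : (dickson m d)`_i =
  \sum_(l < (m./2).+1)
     (m%:R / (m - l)%:R * 'C(m - l, l)%:R * (- d) ^+ l) * (i == (m - 2 * l)%N)%:R.
Proof. by rewrite /dickson coef_sum; apply: eq_bigr => l _; rewrite coefZ coefXn. Qed.

Lemma double_le_half m l : (l < (m./2).+1)%N = (2 * l <= m)%N.
Proof. by rewrite ltnS -divn2; apply/idP/idP; lia. Qed.

Lemma coef_dickson_gap m d i :
  (forall l, (2 * l <= m)%N -> i != (m - 2 * l)%N) -> (dickson m d)`_i = 0.
Proof.
move=> gap; rewrite coef_dickson big1 // => l _.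
by rewrite (negbTE (gap l _)) ?mulr0 // -double_le_half.
Qed.

Lemma coef_dickson_sub_double m d l : (2 * l <= m)%N ->
  (dickson m d)`_(m - 2 * l) = m%:R / (m - l)%:R * 'C(m - l, l)%:R * (- d) ^+ l.
Proof.
rewrite -double_le_half => hl; rewrite coef_dickson (bigD1 (Ordinal hl)) //= eqxx mulr1.
rewrite big1 ?addr0 // => l' hl'; have := ltn_ord l'; rewrite double_le_half => hl'm.
have /negbTE -> : (m - 2 * l != m - 2 * l')%N; last by rewrite mulr0.
by apply: contra hl' => /eqP e; apply/eqP/val_inj => /=; move: hl; rewrite double_le_half; lia.
Qed.

Lemma coef_dickson_lead m d : (0 < m)%N -> (dickson m d)`_m = 1.
Proof.
move=> hm; have := @coef_dickson_sub_double m d 0 (leq0n _).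
rewrite muln0 !subn0 bin0 expr0 !mulr1 => ->.
by rewrite divff // pnatr_eq0 -lt0n.
Qed.

Lemma coef_dickson_top m d : (4 < m)%N ->
  [/\ (dickson m d)`_(m - 1) = 0,
      (dickson m d)`_(m - 2) = - (m%:R * d)
    & (dickson m d)`_(m - 4) = m%:R * (m%:R - 3) / 2 * d ^+ 2].
Proof.
move=> hm; have hx : 5 <= m%:R :> rat by rewrite (ler_nat _ 5).
have sub_double l := @coef_dickson_sub_double m d l.
split.
- by apply: coef_dickson_gap => l hl; lia.
- have := sub_double 1%N _; rewrite muln1 => -> //; last by lia.
  rewrite bin1 expr1 divfK ?mulrN // natrB; last by lia.
  by rewrite gt_eqF //; lra.
- have := sub_double 2%N _; rewrite muln2 => -> //; last by lia.
  have b2 := natr_bin2 rat (m - 2).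
  rewrite natrB in b2; last by lia.
  rewrite natrB; last by lia.
  have -> : 'C(m - 2, 2)%:R = (m%:R - 2) * (m%:R - 2 - 1) / 2 :> rat.
    by rewrite -b2; field.
  rewrite sqrrN; field.
  by rewrite gt_eqF //; lra.
Qed.

Lemma eq0_lincomb (R : comRingType) (k A B X : R) : A = B -> X = k * (A - B) -> X = 0.
Proof. by move=> -> ->; rewrite subrr mulr0. Qed.

(* The equations given by the coefficients of x^n, x^(n-2) and x^(n-4) (once
   h = 1/2), with x = n, b2 = C(n,2), b4 = C(n,4) and w = c^(n-4): the second
   one gives c^2 d = (x-1)/24, and the third then reduces to
   x (x-1) (x-3) (2x-9) = 0, impossible for x >= 5. *)
Lemma top_coef_system_inconsistent (R : realFieldType) (x b2 b4 K w c e d : R) :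
  5 <= x -> K != 0 -> w != 0 -> c != 0 ->
  b2 * 2 = x * (x - 1) -> b4 * 24 = x * (x - 1) * (x - 2) * (x - 3) ->
  K * (w * c ^+ 4) = e ->
  K * (w * c ^+ 2 * b2 * - 12^-1) = e * - (x * d) ->
  K * (w * b4 * (7 / 240)) = e * (x * (x - 3) / 2 * d ^+ 2) ->
  False.
Proof.
move=> hx nzK nzw nzc hb2 hb4 <- eq2 eq4.
have b2E : b2 = x * (x - 1) / 2 by rewrite -hb2; field.
have b4E : b4 = x * (x - 1) * (x - 2) * (x - 3) / 24 by rewrite -hb4; field.
rewrite b2E in eq2; rewrite b4E in eq4.
have pos y : 0 < y -> y != 0 by move=> hy; rewrite gt_eqF.
have nzKwx : K * w * x != 0 by rewrite !mulf_neq0 // pos //; lra.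
have c2d : c ^+ 2 * d = (x - 1) / 24.
  apply/eqP; rewrite -subr_eq0; apply/eqP.
  have : K * w * x * c ^+ 2 * (c ^+ 2 * d - (x - 1) / 24) = 0.
    by apply: (eq0_lincomb (k := 1) eq2); field.
  by move/eqP; rewrite 2!mulf_eq0 (negbTE nzKwx) expf_eq0 (negbTE nzc) andbF => /eqP.
have hd : d = (x - 1) / (24 * c ^+ 2).
  by apply: (mulfI (expf_neq0 2 nzc)); rewrite c2d; field.
rewrite hd in eq4.
have : K * w * x * ((x - 1) * (x - 3) * (2 * x - 9)) = 0.
  by apply: (eq0_lincomb (k := 5760) eq4); field.
by apply/eqP; rewrite !mulf_neq0 // pos //; lra.
Qed.

Lemma bernpoly_affine_dickson_degree n m (K c h e d : rat) :
  (0 < n)%N -> (0 < m)%N -> K != 0 -> c != 0 -> e != 0 ->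
  (forall i, (0 < i)%N ->
     K * (bernpoly n \Po (c *: 'X + h%:P))`_i = e * (dickson m d)`_i) ->
  m = n.
Proof.
move=> hn hm nzK nzc nze coefE.
case: (ltngtP m n) => // [mn | nm].
- have := coefE n hn; rewrite coef_dickson_gap; last by move=> l _; lia.
  rewrite -[n in _`_n]subn0 coef_bernpoly_affine_sub // subn0 bin0.
  have [V0 _ _ _] := bernpoly_small_values h.
  rewrite V0 !mulr1 mulr0 => /eqP.
  by rewrite mulf_eq0 (negbTE nzK) expf_eq0 (negbTE nzc) andbF.
- have := coefE m hm; rewrite coef_bernpoly_affine_high // mulr0 coef_dickson_lead //.
  by rewrite mulr1 => /esym/eqP; rewrite (negbTE nze).
Qed.

Lemma bernpoly_affine_not_dickson n (K c h e d : rat) :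
  (4 < n)%N -> K != 0 -> c != 0 ->
  ~ (forall i, (0 < i)%N ->
       K * (bernpoly n \Po (c *: 'X + h%:P))`_i = e * (dickson n d)`_i).
Proof.
move=> hn nzK nzc coefE.
have match_at t : (t <= 4)%N ->
    K * (c ^+ (n - t) * 'C(n, t)%:R * (bernpoly t).[h]) = e * (dickson n d)`_(n - t).
  by move=> ht; rewrite -coef_bernpoly_affine_sub ?coefE //; lia.
have [V0 V1 V2 V4] := bernpoly_small_values h.
have [D1 D2 D4] := coef_dickson_top d hn.
have D0 : (dickson n d)`_n = 1 by apply: coef_dickson_lead; lia.
have hx : 5 <= n%:R :> rat by rewrite (ler_nat _ 5).
have h_half : h = 2^-1.
  have := match_at 1%N isT; rewrite D1 mulr0 bin1 V1 => /eqP.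
  rewrite !mulf_eq0 (negbTE nzK) expf_eq0 (negbTE nzc) andbF gt_eqF /=; last by lra.
  by rewrite subr_eq0 => /eqP.
have := match_at 0%N isT; rewrite subn0 D0 V0 bin0 !mulr1 => e_top.
have := match_at 2%N isT; rewrite h_half V2 D2 => eq2.
have := match_at 4%N isT; rewrite h_half V4 D4 => eq4.
have pow_n : c ^+ n = c ^+ (n - 4) * c ^+ 4 by rewrite -exprD subnK; last exact: ltnW.
have pow_n2 : c ^+ (n - 2) = c ^+ (n - 4) * c ^+ 2.
  by rewrite -exprD; congr (c ^+ _); lia.
rewrite pow_n in e_top; rewrite pow_n2 in eq2.
exact: (top_coef_system_inconsistent hx nzK (expf_neq0 _ nzc) nzc
  (natr_bin2 _ n) (natr_bin4 _ n) e_top eq2 eq4).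
Qed.

Theorem lemma4 (a b : int) (k : nat) (c1 c0 e1 e0 : rat) :
  a != 0 -> coprimez a b -> (1 <= k)%N -> c1 != 0 -> e1 != 0 ->
  ~ (exists (m : nat) (delta : rat),
       (4 < m)%N /\ delta != 0 /\
       (Sab a b k) \Po (c1 *: 'X + c0%:P) = e1 *: dickson m delta + e0%:P).
Proof.
move=> nz_a _ _ nz_c1 nz_e1 [m [d [hm [_ E]]]].
move: E; rewrite /Sab comp_shifted_affine.
set K := (_ / _ : rat); set h := (c0 + _ : rat).
move/coef_eq_up_to_const => coef_match.
have nzK : K != 0 by rewrite mulf_neq0 ?expf_neq0 ?intr_eq0 ?invr_eq0 ?pnatr_eq0.
have coefE i : (0 < i)%N ->
    K * (bernpoly k.+1 \Po (c1 *: 'X + h%:P))`_i = e1 * (dickson m d)`_i.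
  by move/coef_match; rewrite !coefZ.
have deg : m = k.+1.
  by apply: (bernpoly_affine_dickson_degree _ _ nzK nz_c1 nz_e1 coefE); lia.
by subst m; apply: (bernpoly_affine_not_dickson hm nzK nz_c1 coefE).
Qed.
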